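(* Let $G_1,\ldots,G_n$ be finite non-empty vertex-transitive graphs ordered so that \[\tfrac12\geq\frac{\alpha(G_1)}{|V(G_1)|}=\cdots=\frac{\alpha(G_\ell)}{|V(G_\ell)|}>\frac{\alpha(G_{\ell+1})}{|V(G_{\ell+1})|}\geq\cdots\geq\frac{\alpha(G_n)}{|V(G_n)|},\] where $1\le \ell<n$. Let $H_0=G_1\times\cdots\times G_\ell$ and $G=G_1\times\cdots\times G_n$. Then $G$ is MIS-normal if and only if $H_0$ is MIS-normal and $G_{\ell+1},\ldots,G_n$ are all connected.
   Context: All graphs are finite and simple; a graph is non-empty if it has at least one edge; $\alpha(\cdot)$ is the independence number. The direct product $G\times H$ has vertex set $V(G)\times V(H)$, with $(u_1,v_1)$ adjacent to $(u_2,v_2)$ iff $u_1u_2\in E(G)$ and $v_1v_2\in E(H)$; it is associative, so products of several graphs are well defined. A product $G_1\times\cdots\times G_m$ is called MIS-normal if every maximum independent set of it is the preimage, under the projection onto some factor $G_i$, of an independent set of $G_i$; by convention a product with a single factor ($m=1$) is MIS-normal. *)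

From mathcomp Require Import all_boot all_order all_algebra.
Set Implicit Arguments. Unset Strict Implicit. Unset Printing Implicit Defensive.
Import Order.TTheory GRing.Theory Num.Theory.

Record graph := Graph {
  vt : finType;
  adj : rel vt;
  adj_sym : symmetric adj;
  adj_irr : irreflexive adj }.
Arguments adj : clear implicits.

Section Generic.
Variables (T : finType) (e : rel T).

Definition indep (S : {set T}) : bool :=
  [forall x in S, forall y in S, ~~ e x y].

Definition alpha : nat := \max_(S : {set T} | indep S) #|S|.

Definition max_indep (S : {set T}) : bool := indep S && (#|S| == alpha).
End Generic.

(* non-empty = at least one edge *)
Definition nonempty_graph (G : graph) : Prop := exists x y : vt G, adj G x y.

Definition is_aut (G : graph) (f : vt G -> vt G) : Prop :=
  bijective f /\ forall x y, adj G (f x) (f y) = adj G x y.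

Definition vertex_transitive (G : graph) : Prop :=
  forall u v : vt G, exists f, @is_aut G f /\ f u = v.

Definition connected (G : graph) : Prop :=
  forall x y : vt G, connect (adj G) x y.

Definition indep_ratio (G : graph) : rat := ((alpha (adj G))%:R / (#|vt G|)%:R)%R.

Definition prodv (I : finType) (G : I -> graph) : finType :=
  {dffun forall i : I, vt (G i)}.

Definition prod_adj (I : finType) (G : I -> graph) : rel (prodv G) :=
  fun x y => [forall i, adj (G i) (x i) (y i)].

Arguments prod_adj {I} G.
Arguments prodv {I} G.

Definition MIS_normal (I : finType) (G : I -> graph) : Prop :=
  forall S : {set prodv G}, max_indep (prod_adj G) S ->
    exists i : I, exists A : {set vt (G i)},
      indep (adj (G i)) A /\ S = [set x : prodv G | x i \in A].

Arguments indep_ratio : clear implicits.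
Arguments nonempty_graph : clear implicits.
Arguments vertex_transitive : clear implicits.
Arguments connected : clear implicits.
Arguments MIS_normal {I} G.

(* By Zhang's theorem the independence ratio of a product of vertex-transitive
   graphs is the largest ratio r of a factor.  It is proved by induction on the
   set of coordinates: an independent set S splits into the points with no
   neighbour of S on their line in a fixed coordinate k, and the rest; inside
   the lines, resp. the hyperplanes, which are orbits of automorphism groups,
   the closed neighbourhoods of the two parts are bounded by the inequality
   |I| / |N[I]| <= alpha / |V| valid in any vertex-transitive graph.
   If S is maximum and G k has ratio < r, the first part is empty, so all fibres
   of S over G k have the same maximal size, and S is stable under moving the
   k-th coordinate along an edge; if G k is connected, S does not depend on
   that coordinate at all.  Hence, when all tail factors are connected, every
   maximum independent set of G is the preimage of one of the head H0, and
   MIS-normality passes from H0 to G; preimages of maximum independent sets of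
   H0 are maximum in G, which gives the converse for H0.  Finally, if a tail
   factor G k is disconnected, taking a maximum independent set A of G1 on one
   component of G k and an automorphic image of A elsewhere gives a maximum
   independent set of G that is not a preimage. *)

From mathcomp Require Import all_boot all_order all_algebra all_fingroup.
From mathcomp Require Import zify ring lra.
Import Order.TTheory GRing.Theory Num.Theory.

Set Implicit Arguments.

Lemma sum_eq_mem (T : finType) (a : T) (J : {set T}) :
  (\sum_(j in J) (a == j) = (a \in J))%N.
Proof.
case: (boolP (a \in J)) => aJ.
  rewrite (bigD1 a) //= eqxx big1 // => j /andP[_ ja].
  by rewrite eq_sym (negbTE ja).
by rewrite big1 // => j jJ; apply/eqP; rewrite eqb0; apply: contra aJ => /eqP ->.
Qed.

Lemma card_sep_sum (T : finType) (X : {set T}) (P : pred T) :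
  #|[set x in X | P x]| = (\sum_(x in X) P x)%N.
Proof.
rewrite -sum1_card (eq_bigl (fun x => (x \in X) && P x)); last by move=> x; rewrite inE.
by rewrite big_mkcondr /=; apply: eq_bigr => x _; case: (P x).
Qed.

Section Independence.
Variables (T : finType) (e : rel T).

Lemma indepP (S : {set T}) :
  reflect (forall x y, x \in S -> y \in S -> ~~ e x y) (indep e S).
Proof.
apply: (iffP forallP) => [H x y xS yS | H x].
  by have /implyP/(_ xS)/forallP/(_ y)/implyP/(_ yS) := H x.
by apply/implyP => xS; apply/forallP => y; apply/implyP => yS; apply: H.
Qed.

Lemma indep0 : indep e set0.
Proof. by apply/indepP => x y; rewrite inE. Qed.

Lemma indep_le_alpha (S : {set T}) : indep e S -> (#|S| <= alpha e)%N.
Proof. by move=> H; apply: (leq_bigmax_cond S). Qed.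

Lemma alpha_witness : exists2 S : {set T}, indep e S & #|S| = alpha e.
Proof.
have Hp : (0 < #|[pred S : {set T} | indep e S]|)%N.
  by apply/card_gt0P; exists set0; rewrite inE indep0.
by case: (eq_bigmax_cond (fun S : {set T} => #|S|) Hp) => S SI HS; exists S; rewrite // /alpha HS.
Qed.

Definition closed_nbhd (X : {set T}) : {set T} :=
  [set x | (x \in X) || [exists y in X, e y x]].

End Independence.
Arguments indepP {T e S}.
Arguments alpha_witness {T} e.

(* An orbit [D] of a group of automorphisms behaves like a vertex-transitive
   graph: for an independent [I] inside [D] and a largest independent [J]
   inside [D], [|I| / |N[I] :&: D| <= |J| / |D|]. *)
Section OrbitRatio.
Variables (T : finType) (e : rel T) (A : {group {perm T}}) (u : T).
Hypothesis e_sym : symmetric e.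
Hypothesis A_aut : forall s, s \in A -> forall x y, e (s x) (s y) = e x y.

Local Notation D := (orbit 'P A u).

Lemma orbit_perm_stable s x : s \in A -> x \in D -> s x \in D.
Proof.
move=> sA /orbitP[a aA <-]; apply/orbitP; exists (a * s)%g; first by rewrite groupM.
by rewrite /= !apermE permM.
Qed.

Lemma card_transporters_orbit x y : x \in D -> y \in D ->
  (#|[set s in A | s x == y]| * #|D| = #|A|)%N.
Proof.
move=> xD yD; have Dx : orbit 'P A x = D by apply/orbit_eqP.
have : y \in orbit 'P A x by rewrite Dx.
case/orbitP => a aA <-.
have -> : [set s in A | s x == 'P%act x a] = amove 'P A x ('P%act x a).
  by apply/setP => s; rewrite !inE.
by rewrite amove_act ?subsetT // card_rcoset mulnC -Dx card_orbit_stab.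
Qed.

Lemma sum_card_transport (X Y : {set T}) : X \subset D -> Y \subset D ->
  ((\sum_(s in A) #|[set x in X | s x \in Y]|) * #|D| = #|X| * #|Y| * #|A|)%N.
Proof.
move=> XD YD.
have -> : (\sum_(s in A) #|[set x in X | s x \in Y]| =
           \sum_(x in X) \sum_(y in Y) #|[set s in A | s x == y]|)%N.
  under eq_bigr do rewrite card_sep_sum.
  rewrite exchange_big /=; apply: eq_bigr => x xX.
  under eq_bigr do rewrite -sum_eq_mem.
  by rewrite exchange_big /=; apply: eq_bigr => y yY; rewrite card_sep_sum.
rewrite big_distrl -mulnA -sum_nat_const /=; apply: eq_bigr => x xX.
rewrite big_distrl -sum_nat_const /=; apply: eq_bigr => y yY.
by apply: card_transporters_orbit; [apply: (subsetP XD) | apply: (subsetP YD)].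
Qed.

(* Swapping in a translate of I: if J is a largest independent subset of D, then
   J minus s(N[I]) plus s(I) is again independent, so s(I) is no larger than the
   part of J inside s(N[I]). *)
Lemma card_le_translate_in_max (I J : {set T}) (s : {perm T}) :
  I \subset D -> indep e I -> J \subset D -> indep e J ->
  (forall J' : {set T}, J' \subset D -> indep e J' -> #|J'| <= #|J|)%N ->
  s \in A ->
  (#|I| <= #|[set x in closed_nbhd e I :&: D | s x \in J]|)%N.
Proof.
move=> ID Iind JD Jind Jmax sA.
set N := closed_nbhd e I :&: D.
have IN : I \subset N by apply/subsetP => x xI; rewrite !inE xI (subsetP ID).
have sinj : injective s by apply: perm_inj.
set J' := (J :\: (s @: N)) :|: (s @: I).
have J'D : J' \subset D.
  apply/subsetP => x; rewrite !inE => /orP[/andP[_ xJ]|/imsetP[y yI ->]].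
    exact: (subsetP JD).
  by apply: orbit_perm_stable => //; apply: (subsetP ID).
have cross x b : x \in J :\: s @: N -> b \in I -> ~~ e (s b) x.
  rewrite !inE => /andP[xN xJ] bI; apply/negP => ebx.
  have x'D : (s^-1)%g x \in D by rewrite orbit_perm_stable ?groupV ?(subsetP JD).
  move/negP: xN; apply; apply/imsetP; exists ((s^-1)%g x); last by rewrite permKV.
  rewrite !inE x'D andbT; apply/orP; right; apply/existsP; exists b.
  by rewrite bI /= -(A_aut sA) permKV.
have J'ind : indep e J'.
  apply/indepP => x y; rewrite !inE => /orP[xJ|/imsetP[a aI ->]] /orP[yJ|/imsetP[b bI ->]].
  - by case/andP: xJ => _ xJ; case/andP: yJ => _ yJ; apply: (indepP Jind).
  - by rewrite e_sym; apply: cross; rewrite // !inE.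
  - by apply: cross; rewrite // !inE.
  - by rewrite (A_aut sA); apply: (indepP Iind).
have dis : [disjoint (J :\: s @: N) & s @: I].
  rewrite -setI_eq0; apply/eqP/setP => x; rewrite !inE.
  apply/negP => /andP[/andP[xN _] /imsetP[b bI xe]].
  by move/negP: xN; apply; rewrite xe imset_f // (subsetP IN).
have := Jmax _ J'D J'ind.
rewrite /J' cardsU (_ : _ :&: _ = set0); last by apply/eqP; rewrite setI_eq0.
rewrite cards0 subn0 card_imset //.
have -> : #|[set x in N | s x \in J]| = #|J :&: s @: N|.
  rewrite -(card_imset _ sinj); apply: eq_card => x; rewrite [in RHS]inE.
  apply/imsetP/andP => [[y] | [xJ /imsetP[y yN xE]]].
    by rewrite inE => /andP[yN yJ] ->; split => //; apply: imset_f.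
  by exists y; rewrite // inE yN -xE xJ.
rewrite -(cardsID (s @: N) J); lia.
Qed.

Lemma orbit_indep_nbhd (I : {set T}) : I \subset D -> indep e I ->
  exists J : {set T}, [/\ J \subset D, indep e J &
     (#|I| * #|D| <= #|J| * #|closed_nbhd e I :&: D|)%N].
Proof.
move=> ID Iind.
have P0 : (set0 \subset D) && indep e set0 by rewrite sub0set indep0.
case: (@arg_maxnP {set T} set0 [pred J : {set T} | (J \subset D) && indep e J]
  (fun J : {set T} => #|J|) P0).
move=> J /andP[JD Jind] Jmax; exists J; split => //.
set N := closed_nbhd e I :&: D.
have ND : N \subset D by apply: subsetIr.
have Apos : (0 < #|A|)%N by apply/card_gt0P; exists 1%g.
have lower : (#|A| * #|I| <= \sum_(s in A) #|[set x in N | s x \in J]|)%N.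
  rewrite -sum_nat_const; apply: leq_sum => s sA.
  by apply: card_le_translate_in_max => // J' J'D J'ind; apply: Jmax; rewrite /= J'D.
rewrite -(leq_pmul2l Apos) mulnA.
have -> : (#|A| * (#|J| * #|N|) = #|N| * #|J| * #|A|)%N by ring.
by rewrite -sum_card_transport // leq_mul2r lower orbT.
Qed.

End OrbitRatio.

Section ClassCounting.
Variables (T : finType) (cls : T -> {set T}).
Hypothesis cls_eq : forall z w, (w \in cls z) = (cls w == cls z).

Lemma card_by_classes (X : {set T}) :
  #|X| = (\sum_(c in cls @: X) #|X :&: c|)%N.
Proof.
rewrite -sum1_card (partition_big_imset cls X); apply: eq_bigr => c /imsetP[x xX ->].
by rewrite -sum1_card; apply: eq_bigl => w; rewrite !inE cls_eq.
Qed.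

Lemma ler_card_by_classes (X Y : {set T}) (r : rat) :
  X \subset Y -> (0 <= r)%R ->
  (forall x, x \in X -> #|X :&: cls x|%:R <= r * #|Y :&: cls x|%:R)%R ->
  (#|X|%:R <= r * #|Y|%:R)%R.
Proof.
move=> XY r0 H.
rewrite (card_by_classes X) (card_by_classes Y) !natr_sum mulr_sumr.
rewrite [X in (_ <= X)%R](big_setID (cls @: X)) /= (setIidPr (imsetS cls XY)).
apply: ler_wpDr; first by apply: sumr_ge0 => c _; rewrite mulr_ge0 // ler0n.
by apply: ler_sum => c /imsetP[x xX ->]; apply: H.
Qed.

End ClassCounting.

Section Product.
Variables (I : finType) (G : I -> graph).
Local Notation Z := (prodv G).

Definition adj_on (K : {set I}) : rel Z :=
  fun z w => [forall k in K, adj (G k) (z k) (w k)].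

Definition upd (z : Z) (k : I) (v : vt (G k)) : Z :=
  [ffun i => if @eqP _ k i is ReflectT e then ecast i (vt (G i)) e v else z i].

Lemma upd_same (z : Z) k (v : vt (G k)) : upd z k v k = v.
Proof. by rewrite /upd ffunE; case: eqP => // e; rewrite eq_axiomK. Qed.

Lemma upd_other (z : Z) k (v : vt (G k)) i : i != k -> upd z k v i = z i.
Proof. by move=> ik; rewrite /upd ffunE; case: eqP => // e; rewrite e eqxx in ik. Qed.

Lemma upd_upd (z : Z) k (v v' : vt (G k)) : upd (upd z k v) k v' = upd z k v'.
Proof.
apply/ffunP => i; case: (eqVneq i k) => [->|ik]; first by rewrite !upd_same.
by rewrite !upd_other.
Qed.

Lemma upd_id (z : Z) k : upd z k (z k) = z.
Proof.
apply/ffunP => i; case: (eqVneq i k) => [->|ik]; first by rewrite upd_same.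
by rewrite upd_other.
Qed.

Lemma adj_onP (K : {set I}) (z w : Z) :
  reflect (forall k, k \in K -> adj (G k) (z k) (w k)) (adj_on K z w).
Proof.
apply: (iffP forallP) => [H k kK | H k]; first by have /implyP := H k; apply.
by apply/implyP; apply: H.
Qed.

Lemma adj_on_sym (K : {set I}) : symmetric (adj_on K).
Proof. by move=> z w; apply/adj_onP/adj_onP => H k kK; rewrite adj_sym H. Qed.

Lemma adj_on_eql {K : {set I}} {z z' : Z} :
  (forall k, k \in K -> z k = z' k) -> adj_on K z =1 adj_on K z'.
Proof.
by move=> H w; apply/adj_onP/adj_onP => H' k kK; [rewrite -H | rewrite H] => //; apply: H'.
Qed.

Lemma adj_onU (K1 K2 : {set I}) (z w : Z) :
  adj_on (K1 :|: K2) z w = adj_on K1 z w && adj_on K2 z w.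
Proof.
apply/adj_onP/andP => [H | [/adj_onP H1 /adj_onP H2] k].
  by split; apply/adj_onP => k kK; apply: H; rewrite inE kK ?orbT.
by rewrite inE => /orP[] kK; [apply: H1 | apply: H2].
Qed.

Lemma adj_on1 k (z w : Z) : adj_on [set k] z w = adj (G k) (z k) (w k).
Proof.
apply/adj_onP/idP => [H | H i]; first by apply: H; rewrite inE.
by rewrite inE => /eqP ->.
Qed.

Lemma adj_on0 (z w : Z) : adj_on set0 z w.
Proof. by apply/adj_onP => k; rewrite inE. Qed.

Lemma prod_adjE : prod_adj G =2 adj_on setT.
Proof. by move=> z w; apply/forallP/adj_onP => H k //; apply: H. Qed.

Lemma indep_prod_adjE (S : {set Z}) : indep (prod_adj G) S = indep (adj_on setT) S.
Proof.
by apply/indepP/indepP => H x y xS yS; [rewrite -prod_adjE | rewrite prod_adjE]; apply: H.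
Qed.

Lemma card_box (F : forall i, {set vt (G i)}) :
  #|[set z : Z | [forall i, z i \in F i]]| = (\prod_i #|F i|)%N.
Proof.
rewrite -[RHS]big_enum /= -(big_map (fun i => #|F i|) predT id) -foldrE.
rewrite -(card_family (fun i => mem (F i) : pred _)).
by apply: eq_card => z; rewrite inE; apply/forallP/familyP.
Qed.

Definition card_but k := (\prod_(i | i != k) #|vt (G i)|)%N.

Lemma card_box_but k (F : forall i, {set vt (G i)}) :
  (forall i, i != k -> F i = setT) ->
  #|[set z : Z | [forall i, z i \in F i]]| = (#|F k| * card_but k)%N.
Proof.
move=> HF; rewrite card_box (bigD1 k) //=; congr (_ * _)%N.
by apply: eq_bigr => i ik; rewrite HF // cardsT.
Qed.

Lemma card_prodv k : #|Z| = (#|vt (G k)| * card_but k)%N.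
Proof.
have := @card_box_but k (fun i => setT) (fun _ _ => erefl); rewrite cardsT => <-.
by apply: eq_card => z; rewrite !inE; symmetry; apply/forallP => i; rewrite inE.
Qed.

Definition line (z : Z) k := [set w : Z | [forall i, (i != k) ==> (w i == z i)]].
Definition hplane (z : Z) k := [set w : Z | w k == z k].

Lemma card_line (z : Z) k : #|line z k| = #|vt (G k)|.
Proof.
have := card_box (fun i => if i == k then setT else [set z i]).
rewrite (bigD1 k) //= eqxx cardsT big1 ?muln1 => [<-|i /negbTE->]; last exact: cards1.
apply: eq_card => w; rewrite !inE.
by apply/forallP/forallP => H i; move: (H i); case: (eqVneq i k) => // _; rewrite inE.
Qed.

Lemma card_hplane (z : Z) k : #|hplane z k| = card_but k.
Proof.
have := @card_box_but k (fun i => if i == k then [set z i] else setT).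
rewrite eqxx cards1 mul1n => <-; last by move=> i /negbTE ->.
apply: eq_card => w; rewrite !inE.
apply/eqP/forallP => [wk i | H]; last by move: (H k); rewrite eqxx inE => /eqP.
by case: (eqVneq i k) => [->|ik]; rewrite ?inE ?wk.
Qed.

Lemma line_refl (z : Z) k : z \in line z k.
Proof. by rewrite inE; apply/forallP => i; rewrite eqxx implybT. Qed.

Lemma line_sym (z w : Z) k : (w \in line z k) = (z \in line w k).
Proof.
by rewrite !inE; apply/forallP/forallP => H i; move: (H i); case: (i != k); rewrite //= eq_sym.
Qed.

Lemma line_trans (x y z : Z) k : x \in line y k -> y \in line z k -> x \in line z k.
Proof.
rewrite !inE => /forallP H1 /forallP H2; apply/forallP => i; apply/implyP => ik.
by rewrite (eqP (implyP (H1 i) ik)) (implyP (H2 i) ik).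
Qed.

Lemma line_inj (z w : Z) k : w \in line z k -> w k = z k -> w = z.
Proof.
rewrite inE => /forallP H wk; apply/ffunP => i.
by case: (eqVneq i k) => [->|ik] //; apply/eqP; apply: (implyP (H i)).
Qed.

Lemma line_class k (z w : Z) : (w \in line z k) = (line w k == line z k).
Proof.
apply/idP/eqP => [wz | <-]; last exact: line_refl.
apply/setP => y; apply/idP/idP => H; first exact: line_trans H wz.
by apply: line_trans H _; rewrite line_sym.
Qed.

Lemma hplane_class k (z w : Z) : (w \in hplane z k) = (hplane w k == hplane z k).
Proof.
rewrite inE; apply/eqP/eqP => [E | E]; first by apply/setP => y; rewrite !inE E.
have : w \in hplane w k by rewrite inE.
by rewrite E inE => /eqP.
Qed.

(* The orbits are lines for [M = pred1 k] and hyperplanes for [M = predC1 k]. *)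
Definition coord_auts_set (M : pred I) (K : {set I}) : {set {perm Z}} :=
  [set s : {perm Z} | [forall x, forall i, (i \notin M) ==> (s x i == x i)] &&
      [forall x, forall y, adj_on K (s x) (s y) == adj_on K x y]].

Lemma coord_auts_group_set (M : pred I) (K : {set I}) : group_set (coord_auts_set M K).
Proof.
apply/group_setP; split.
  rewrite inE; apply/andP; split; apply/forallP => x;
    [apply/forallP => i | apply/forallP => y]; by rewrite !perm1 ?eqxx ?implybT.
move=> s t; rewrite !inE => /andP[/forallP s1 /forallP s2] /andP[/forallP t1 /forallP t2].
apply/andP; split; apply/forallP => x;
  [apply/forallP => i; apply/implyP => iM | apply/forallP => y].
  by rewrite permM (eqP (implyP (forallP (t1 (s x)) i) iM)) (implyP (forallP (s1 x) i) iM).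
by rewrite !permM (eqP (forallP (t2 (s x)) (s y))) (forallP (s2 x) y).
Qed.

Canonical coord_auts (M : pred I) (K : {set I}) := group (coord_auts_group_set M K).

Lemma coord_auts_fix (M : pred I) (K : {set I}) s (x : Z) i :
  s \in coord_auts M K -> i \notin M -> s x i = x i.
Proof.
by rewrite inE => /andP[/forallP H _] iM; have /forallP/(_ i)/implyP/(_ iM)/eqP := H x.
Qed.

Lemma coord_auts_adj (M : pred I) (K : {set I}) s :
  s \in coord_auts M K -> forall x y, adj_on K (s x) (s y) = adj_on K x y.
Proof. by rewrite inE => /andP[_ /forallP H] x y; have /forallP/(_ y)/eqP := H x. Qed.

Lemma orbit_coord_auts (M : pred I) (K : {set I}) (u : Z) :
  (forall i, i \in M -> vertex_transitive (G i)) ->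
  orbit 'P (coord_auts M K) u = [set w : Z | [forall i, (i \notin M) ==> (w i == u i)]].
Proof.
move=> VT; apply/setP => w; rewrite inE; apply/orbitP/idP.
  case=> s sA <-; apply/forallP => i; apply/implyP => iM.
  by rewrite /= apermE (@coord_auts_fix M K s u i sA iM).
move=> Hw.
have : forall i, exists f : vt (G i) -> vt (G i),
    is_aut f /\ f (u i) = w i /\ (i \notin M -> forall v, f v = v).
  move=> i; case: (boolP (i \in M)) => iM.
    by case: (VT i iM (u i) (w i)) => f [fa fu]; exists f; split => //; split => //; rewrite iM.
  exists id; split; first by split => //; exists id.
  by split => //; have /forallP/(_ i)/implyP/(_ iM)/eqP := Hw.
case/fin_all_exists => f Hf.
have finj i : injective (f i) by case: (Hf i) => [[fb _] _]; apply: bij_inj.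
pose g := fun z : Z => [ffun i => f i (z i)] : Z.
have ginj : injective g.
  move=> z1 z2 /ffunP E; apply/ffunP => i; move: (E i); rewrite !ffunE; apply: finj.
exists (perm ginj); last first.
  by rewrite /= apermE permE; apply/ffunP => i; rewrite /g ffunE; case: (Hf i) => _ [-> _].
rewrite inE; apply/andP; split; apply/forallP => x.
  apply/forallP => i; apply/implyP => iM; rewrite permE /g ffunE.
  by case: (Hf i) => _ [_ ->].
apply/forallP => y; rewrite !permE; apply/eqP; apply/adj_onP/adj_onP => H k kK;
  by move: (H k kK); rewrite /g !ffunE; case: (Hf k) => [[_ ->]].
Qed.

Lemma orbit_line k (K : {set I}) (x : Z) : vertex_transitive (G k) ->
  orbit 'P (coord_auts (pred1 k) K) x = line x k.
Proof.
move=> VT; rewrite orbit_coord_auts; last by move=> i; rewrite inE => /eqP ->.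
by apply/setP => w; rewrite !inE.
Qed.

Lemma orbit_hplane k (K : {set I}) (x : Z) : (forall i, vertex_transitive (G i)) ->
  orbit 'P (coord_auts (predC1 k) K) x = hplane x k.
Proof.
move=> VT; rewrite orbit_coord_auts //; apply/setP => w; rewrite !inE.
apply/forallP/idP => [H | H i]; first by have := H k; rewrite /= negbK eqxx.
by rewrite /= negbK; apply/implyP => /eqP ->.
Qed.

Lemma card_line_indep_le_alpha k (x : Z) (J : {set Z}) :
  J \subset line x k -> indep (adj_on [set k]) J -> (#|J| <= alpha (adj (G k)))%N.
Proof.
move=> JL Jind; rewrite -(card_in_imset (f := fun w : Z => w k)); last first.
  move=> a b aJ bJ; apply: line_inj.
  by apply: line_trans (subsetP JL _ aJ) _; rewrite line_sym (subsetP JL _ bJ).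
apply: indep_le_alpha; apply/indepP => a b /imsetP[a' a'J ->] /imsetP[b' b'J ->].
by rewrite -adj_on1; apply: (indepP Jind).
Qed.

(* Spreading [J] along the [k]-th coordinate gives an [adj_on K]-independent
   cylinder of size [#|J| * #|vt (G k)|]. *)
Lemma card_hplane_indep_le k (K : {set I}) (rho : rat) (v : vt (G k)) (J : {set Z}) :
  k \notin K ->
  (forall X : {set Z}, indep (adj_on K) X -> (#|X|%:R <= rho * #|Z|%:R)%R) ->
  J \subset [set w : Z | w k == v] -> indep (adj_on K) J ->
  ((#|J| * #|vt (G k)|)%:R <= rho * #|Z|%:R)%R.
Proof.
move=> kK rhoK JH Jind.
set X := [set w : Z | upd w k v \in J].
have updK (a : Z) i : i \in K -> upd a k v i = a i.
  by move=> iK; rewrite upd_other //; apply: contraNneq kK => <-.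
have Xind : indep (adj_on K) X.
  apply/indepP => a b; rewrite !inE => aJ bJ; have := indepP Jind _ _ aJ bJ.
  by rewrite (adj_on_eql (updK a)) adj_on_sym (adj_on_eql (updK b)) adj_on_sym.
suff <- : #|X| = (#|J| * #|vt (G k)|)%N by apply: rhoK.
rewrite -sum1_card (partition_big (fun w => upd w k v) (mem J)) /=; last first.
  by move=> w; rewrite inE.
rewrite -sum_nat_const; apply: eq_bigr => j jJ.
have jk : j k = v by have := subsetP JH _ jJ; rewrite inE => /eqP.
rewrite -(card_line j k) -sum1_card; apply: eq_bigl => w.
rewrite inE; apply/andP/idP => [[_ /eqP E] | wl].
  by rewrite inE; apply/forallP => i; apply/implyP => ik; rewrite -E upd_other.
suff -> : upd w k v = j by rewrite jJ.
apply/ffunP => i; case: (eqVneq i k) => [->|ik]; first by rewrite upd_same jk.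
by rewrite upd_other //; apply/eqP; move: wl; rewrite inE => /forallP/(_ i)/implyP; apply.
Qed.

Section LineHplaneSplit.
Variables (k : I) (K : {set I}) (S : {set Z}).
Hypothesis kK : k \notin K.
Hypothesis Sind : indep (adj_on (k |: K)) S.

Local Notation e1 := (adj_on [set k]).
Local Notation e2 := (adj_on K).

Definition line_isolated :=
  [set s in S | [forall w in S, (w \in line s k) ==> ~~ e1 s w]].

Local Notation P := line_isolated.

(* The closed neighbourhoods of [P] along lines and of [S :\: P] along
   hyperplanes. *)
Definition line_cover :=
  [set w : Z | [exists s in P, (s \in line w k) && ((s == w) || e1 s w)]].

Definition hplane_cover :=
  [set w : Z | [exists t in S :\: P, (t k == w k) && ((t == w) || e2 t w)]].

Lemma line_isolated_sub : P \subset S.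
Proof. by apply/subsetP => s; rewrite inE => /andP[]. Qed.

Lemma line_isolated_sub_cover : P \subset line_cover.
Proof.
by apply/subsetP => s sP; rewrite inE; apply/existsP; exists s; rewrite sP line_refl eqxx.
Qed.

Lemma not_adj_on_both {s w : Z} : s \in S -> w \in S -> ~~ (e1 s w && e2 s w).
Proof. by move=> sS wS; rewrite -adj_onU; apply: (indepP Sind). Qed.

Lemma e1_eql {s s' : Z} (w : Z) : s k = s' k -> e1 s w = e1 s' w.
Proof. by move=> E; apply: adj_on_eql => i; rewrite inE => /eqP ->. Qed.

Lemma e2_eql {s s' : Z} (w : Z) : s \in line s' k -> e2 s w = e2 s' w.
Proof.
rewrite inE => /forallP H; apply: adj_on_eql => i iK.
by apply/eqP; apply: (implyP (H i)); apply: contraNneq kK => <-.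
Qed.

Lemma line_isolated_not_adj {s w : Z} :
  s \in P -> w \in S -> w \in line s k -> ~~ e1 s w.
Proof.
rewrite inE => /andP[_ /forallP H] wS wl.
by have /implyP/(_ wS)/implyP/(_ wl) := H w.
Qed.

(* A non-isolated [s] has an [e1]-neighbour [w'] on its line; [w'] shares the
   [K]-coordinates of [s], so an [e2]-edge from [s] to [w] in the hyperplane of
   [s] would make [w'] and [w] adjacent in [S]. *)
Lemma hplane_not_adj {s w : Z} :
  s \in S -> s \notin P -> w \in S -> w k = s k -> ~~ e2 s w.
Proof.
move=> sS sP wS wk; apply/negP => esw.
move: sP; rewrite inE sS /= negb_forall => /existsP[w'].
rewrite negb_imply => /andP[w'S]; rewrite negb_imply negbK => /andP[w'l esw'].
have := not_adj_on_both w'S wS.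
by rewrite adj_on_sym (e1_eql w' wk) esw' /= (e2_eql _ w'l) esw.
Qed.

Lemma disjoint_covers : [disjoint line_cover & hplane_cover].
Proof.
rewrite -setI_eq0; apply/eqP/setP => w; rewrite !inE; apply/negP.
case/andP => /existsP[s /andP[sP /andP[sl ss]]] /existsP[t /andP[tQ /andP[/eqP tk tt]]].
have sS := subsetP line_isolated_sub s sP.
move: tQ; rewrite inE => /andP[tP tS].
case/orP: ss => [/eqP esw | es]; case/orP: tt => [/eqP etw | et].
- by move: tP; rewrite etw -esw sP.
- have E : s k = t k by rewrite esw tk.
  by move: (hplane_not_adj tS tP sS E); rewrite esw et.
- by move: (line_isolated_not_adj sP tS); rewrite etw line_sym sl es => /(_ isT).
- have := not_adj_on_both sS tS.
  by rewrite (adj_on_sym _ s t) (e1_eql s tk) (adj_on_sym _ w s) es (e2_eql _ sl) adj_on_sym et.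
Qed.

Lemma card_covers_le : (#|line_cover| + #|hplane_cover| <= #|Z|)%N.
Proof.
rewrite -cardsUI (_ : _ :&: _ = set0) ?cards0 ?addn0 ?max_card //.
by apply/eqP; rewrite setI_eq0 disjoint_covers.
Qed.

Lemma card_line_isolated_le : vertex_transitive (G k) ->
  (#|P|%:R <= indep_ratio (G k) * #|line_cover|%:R)%R.
Proof.
move=> VTk.
have r0 : (0 <= indep_ratio (G k))%R by rewrite divr_ge0 ?ler0n.
apply: (ler_card_by_classes _ (line_class k) _ line_isolated_sub_cover r0) => x xP.
have PxL : P :&: line x k \subset orbit 'P (coord_auts (pred1 k) [set k]) x.
  by rewrite orbit_line // subsetIr.
have Pxind : indep e1 (P :&: line x k).
  apply/indepP => a b /setIP[aP al] /setIP[bP bl].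
  apply: line_isolated_not_adj aP (subsetP line_isolated_sub _ bP) _.
  by apply: line_trans bl _; rewrite line_sym.
have [J [JL Jind HJ]] :=
  orbit_indep_nbhd _ (adj_on_sym _) (@coord_auts_adj (pred1 k) [set k]) PxL Pxind.
rewrite orbit_line // card_line in HJ JL.
have Ja := card_line_indep_le_alpha JL Jind.
have Nsub : closed_nbhd e1 (P :&: line x k) :&: line x k \subset line_cover :&: line x k.
  apply/subsetP => w /setIP[wN wl]; rewrite in_setI wl andbT inE; apply/existsP.
  move: wN; rewrite inE => /orP[/setIP[wP _] | /existsP[y /andP[/setIP[yP yl] ey]]].
    by exists w; rewrite wP line_refl eqxx.
  exists y; rewrite yP ey orbT andbT.
  by apply: line_trans yl _; rewrite line_sym.
have Vk : (0 < #|vt (G k)|)%N.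
  by rewrite -(card_line x k); apply/card_gt0P; exists x; apply: line_refl.
rewrite /indep_ratio mulrAC ler_pdivlMr ?ltr0n // -!natrM ler_nat.
exact: leq_trans HJ (leq_mul Ja (subset_leq_card Nsub)).
Qed.

Lemma card_hplane_part_le (rho : rat) : (forall i, vertex_transitive (G i)) -> (0 <= rho)%R ->
  (forall X : {set Z}, indep e2 X -> (#|X|%:R <= rho * #|Z|%:R)%R) ->
  (#|S :\: P|%:R <= rho * #|hplane_cover|%:R)%R.
Proof.
move=> VT r0 rhoK; set Q := S :\: P.
have QD2 : Q \subset hplane_cover.
  by apply/subsetP => t tQ; rewrite inE; apply/existsP; exists t; rewrite tQ !eqxx.
apply: (ler_card_by_classes _ (hplane_class k) _ QD2 r0) => x xQ.
have QxH : Q :&: hplane x k \subset orbit 'P (coord_auts (predC1 k) K) x.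
  by rewrite orbit_hplane // subsetIr.
have Qxind : indep e2 (Q :&: hplane x k).
  apply/indepP => a b /setIP[/setDP[aS aP] ah] /setIP[/setDP[bS bP] bh].
  by apply: hplane_not_adj => //; move: ah bh; rewrite !inE => /eqP -> /eqP ->.
have [J [JH Jind HJ]] :=
  orbit_indep_nbhd _ (adj_on_sym _) (@coord_auts_adj (predC1 k) K) QxH Qxind.
rewrite orbit_hplane // card_hplane in HJ JH.
have HJrho := @card_hplane_indep_le k K rho (x k) J kK rhoK JH Jind.
have Nsub : closed_nbhd e2 (Q :&: hplane x k) :&: hplane x k \subset hplane_cover :&: hplane x k.
  apply/subsetP => w /setIP[wN wh]; rewrite in_setI wh andbT inE; apply/existsP.
  move: wN; rewrite inE => /orP[/setIP[wQ _] | /existsP[y /andP[/setIP[yQ yh] ey]]].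
    by exists w; rewrite wQ !eqxx.
  exists y; rewrite yQ ey orbT andbT.
  by move: yh wh; rewrite !inE => /eqP yx /eqP wx; rewrite /= yx wx.
have Hpos : (0 < card_but k)%N.
  by rewrite -(card_hplane x k); apply/card_gt0P; exists x; rewrite inE.
set N := #|hplane_cover :&: hplane x k| in Nsub *; set c := #|Q :&: hplane x k| in HJ *.
have HJN := leq_trans HJ (leq_mul (leqnn #|J|) (subset_leq_card Nsub)).
rewrite -(@ler_pM2r _ (card_but k * #|vt (G k)|)%:R) ?ltr0n ?muln_gt0 ?Hpos //=; last first.
  by rewrite -(card_line x k); apply/card_gt0P; exists x; apply: line_refl.
apply: (@le_trans _ _ ((#|J| * #|vt (G k)|)%:R * N%:R)%R).
  by rewrite -!natrM ler_nat mulnA [X in (_ <= X)%N]mulnAC leq_mul2r HJN orbT.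
apply: (@le_trans _ _ (rho * #|Z|%:R * N%:R)%R); first by rewrite ler_wpM2r ?ler0n.
by rewrite (card_prodv k) mulnC mulrAC.
Qed.

Lemma card_split_le (rho : rat) : (forall i, vertex_transitive (G i)) -> (0 <= rho)%R ->
  (forall X : {set Z}, indep e2 X -> (#|X|%:R <= rho * #|Z|%:R)%R) ->
  (#|S|%:R <= indep_ratio (G k) * #|line_cover|%:R + rho * #|hplane_cover|%:R)%R.
Proof.
move=> VT r0 rhoK.
rewrite -(cardsID P S) (setIidPr line_isolated_sub) natrD.
by apply: lerD; [apply: card_line_isolated_le | apply: card_hplane_part_le].
Qed.

End LineHplaneSplit.

Lemma indep_adj_on_le (K : {set I}) (rho : rat) :
  (forall i, vertex_transitive (G i)) -> (0 <= rho)%R ->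
  (forall k, k \in K -> (indep_ratio (G k) <= rho)%R) ->
  forall S : {set Z}, indep (adj_on K) S -> (#|S|%:R <= rho * #|Z|%:R)%R.
Proof.
move=> VT r0; have [m Km] := ubnP #|K|; elim: m K Km => // m IH K Km rhoK S Sind.
case: (set_0Vmem K) => [K0 | [k kK]].
  suff -> : S = set0 by rewrite cards0 mulr_ge0 ?ler0n.
  apply/setP => s; rewrite inE; apply/negP => sS.
  by have := indepP Sind _ _ sS sS; rewrite K0 adj_on0.
have kK' : k \notin K :\ k by rewrite setD11.
have rhoK' : forall X : {set Z}, indep (adj_on (K :\ k)) X -> (#|X|%:R <= rho * #|Z|%:R)%R.
  apply: IH => [|i /setD1P[_ iK]]; last exact: rhoK.
  by move: Km; rewrite (cardsD1 k K) kK.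
rewrite -(setD1K kK) in Sind.
apply: (le_trans (card_split_le k (K :\ k) S kK' Sind rho VT r0 rhoK')).
apply: (@le_trans _ _ (rho * #|line_cover k S|%:R +
                       rho * #|hplane_cover k (K :\ k) S|%:R)%R).
  by rewrite lerD2r ler_wpM2r ?ler0n // rhoK.
by rewrite -mulrDr ler_wpM2l // -natrD ler_nat (card_covers_le k (K :\ k) S kK' Sind).
Qed.

Lemma alpha_prod_le (rho : rat) :
  (forall i, vertex_transitive (G i)) -> (0 <= rho)%R ->
  (forall k, (indep_ratio (G k) <= rho)%R) ->
  ((alpha (prod_adj G))%:R <= rho * #|Z|%:R)%R.
Proof.
move=> VT r0 rhoG; have [S Sind <-] := alpha_witness (prod_adj G).
by apply: (indep_adj_on_le (K := setT)) => //; rewrite -indep_prod_adjE.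
Qed.

Definition cylinder_box k (A : {set vt (G k)}) i : {set vt (G i)} :=
  if @eqP _ k i is ReflectT e then ecast i {set vt (G i)} e A else setT.

Lemma card_cylinder k (A : {set vt (G k)}) :
  #|[set z : Z | z k \in A]| = (#|A| * card_but k)%N.
Proof.
have boxk : cylinder_box k A k = A by rewrite /cylinder_box; case: eqP => // e; rewrite eq_axiomK.
have boxi i : i != k -> cylinder_box k A i = setT.
  by move=> ik; rewrite /cylinder_box; case: eqP => // e; rewrite e eqxx in ik.
rewrite -[in RHS]boxk -(card_box_but k _ boxi); apply: eq_card => z; rewrite !inE.
apply/idP/forallP => [zA i | /(_ k)]; last by rewrite boxk.
by case: (eqVneq i k) => [->|ik]; rewrite ?boxk // boxi ?inE.
Qed.

Lemma alpha_prod_ge k : (alpha (adj (G k)) * card_but k <= alpha (prod_adj G))%N.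
Proof.
have [A Aind <-] := alpha_witness (adj (G k)).
rewrite -card_cylinder; apply: indep_le_alpha; apply/indepP => x y; rewrite !inE => xA yA.
by apply/negP => /forallP/(_ k); apply/negP; apply: (indepP Aind).
Qed.

Lemma alpha_prodE k : (forall i, vertex_transitive (G i)) -> (0 < #|vt (G k)|)%N ->
  (forall i, (indep_ratio (G i) <= indep_ratio (G k))%R) ->
  ((alpha (prod_adj G))%:R = indep_ratio (G k) * #|Z|%:R)%R.
Proof.
move=> VT Vk rk; apply/eqP; rewrite eq_le alpha_prod_le ?divr_ge0 ?ler0n //=.
have := alpha_prod_ge k; rewrite -(ler_nat rat); apply: le_trans.
by rewrite (card_prodv k) /indep_ratio !natrM mulrA divfK ?pnatr_eq0 -?lt0n.
Qed.

End Product.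

Arguments adj_on {I G}.
Arguments coord_auts {I G}.
Arguments card_but {I} G k.
Arguments card_prodv {I} G k.
Arguments alpha_prodE {I G} k.
Arguments card_hplane_indep_le {I G k K rho v J}.
Arguments hplane_not_adj {I G k K S}.
Arguments card_covers_le {I G k K S}.
Arguments card_split_le {I G k K S}.

Section MaxIndepFibres.
Variables (I : finType) (G : I -> graph) (r : rat) (j : I) (S : {set prodv G}).
Hypothesis VT : forall i, vertex_transitive (G i).
Hypothesis r_max : forall i, (indep_ratio (G i) <= r)%R.
Hypothesis rj_lt : (indep_ratio (G j) < r)%R.
Hypothesis Sind : indep (prod_adj G) S.
Hypothesis Scard : (#|S|%:R = r * #|prodv G|%:R)%R.

Local Notation Z := (prodv G).
Local Notation K := ([set: I] :\ j).

Lemma r_ge0 : (0 <= r)%R.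
Proof. by apply: le_trans (r_max j); rewrite divr_ge0 ?ler0n. Qed.

Lemma indep_bound_off_j (X : {set Z}) : indep (adj_on K) X -> (#|X|%:R <= r * #|Z|%:R)%R.
Proof. exact: indep_adj_on_le VT r_ge0 (fun i _ => r_max i) X. Qed.

Lemma indep_adj_on_split : indep (adj_on (j |: K)) S.
Proof. by rewrite setD1K ?in_setT // -indep_prod_adjE. Qed.

(* In the bound of [card_split_le] the weight of the line part is
   [indep_ratio (G j) < r], so a set of size [r * #|Z|] has no line part. *)
Lemma line_isolated_eq0 : line_isolated j S = set0.
Proof.
have jK : j \notin K by rewrite setD11.
have split := card_split_le jK indep_adj_on_split r VT r_ge0 indep_bound_off_j.
rewrite Scard in split.
have covers : (#|line_cover j S|%:R + #|hplane_cover j K S|%:R <= #|Z|%:R :> rat)%R.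
  by rewrite -natrD ler_nat (card_covers_le jK indep_adj_on_split).
have := ler_wpM2l r_ge0 covers; rewrite mulrDr => rcovers.
have rD1 : (r * #|line_cover j S|%:R <= indep_ratio (G j) * #|line_cover j S|%:R)%R by lra.
have /eqP D1eq0 : line_cover j S == set0.
  rewrite -cards_eq0 -leqn0 leqNgt -(ltr_nat rat); apply/negP => D1pos.
  by move: rD1; rewrite ler_pM2r // leNgt rj_lt.
by apply/eqP; rewrite -subset0 -D1eq0 line_isolated_sub_cover.
Qed.

Lemma fibre_not_adj s w : s \in S -> w \in S -> w j = s j -> ~~ adj_on K s w.
Proof.
move=> sS wS wj; apply: (hplane_not_adj (negbT (setD11 j _)) indep_adj_on_split) => //.
by rewrite line_isolated_eq0 inE.
Qed.

Definition fibre y := [set s in S | s j == y].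

Lemma card_fibre_indep_le {y : vt (G j)} {X : {set Z}} :
  X \subset [set w : Z | w j == y] -> indep (adj_on K) X -> (#|X|%:R <= r * (card_but G j)%:R)%R.
Proof.
move=> Xj Xind.
have := card_hplane_indep_le (negbT (setD11 j _)) indep_bound_off_j Xj Xind.
have Vj : (0 < #|vt (G j)|)%N by apply/card_gt0P; exists y.
by rewrite (card_prodv G j) !natrM mulrCA [X in (_ <= X)%R]mulrC ler_pM2r ?ltr0n.
Qed.

Lemma fibre_indep y : indep (adj_on K) (fibre y).
Proof.
apply/indepP => a b; rewrite !inE => /andP[aS /eqP aj] /andP[bS /eqP bj].
by apply: fibre_not_adj; rewrite // aj bj.
Qed.

(* Every fibre has the maximal size [r * card_but G j], since they add up to [#|S| = r * #|Z|]. *)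
Lemma card_fibreE y : (#|fibre y|%:R = r * (card_but G j)%:R)%R.
Proof.
have le_fibre y' : (#|fibre y'|%:R <= r * (card_but G j)%:R)%R.
  apply: (card_fibre_indep_le (y := y') _ (fibre_indep y')).
  by apply/subsetP => w; rewrite !inE => /andP[].
have Ssum : #|S| = (\sum_(y' : vt (G j)) #|fibre y'|)%N.
  rewrite -sum1_card (partition_big (fun s : Z => s j) predT) //=.
  by apply: eq_bigr => y' _; rewrite -sum1_card; apply: eq_bigl => s; rewrite !inE.
have gap0 : (\sum_(y' : vt (G j)) (r * (card_but G j)%:R - #|fibre y'|%:R) = 0)%R.
  rewrite sumrB sumr_const -natr_sum -Ssum Scard (card_prodv G j) -mulr_natr natrM; ring.
have gap_ge0 y' : (0 <= r * (card_but G j)%:R - #|fibre y'|%:R)%R by rewrite subr_ge0 le_fibre.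
have /eqP := psumr_eq0P (fun y' _ => gap_ge0 y') gap0 (i := y) isT.
by rewrite subr_eq0 => /eqP.
Qed.

(* For an edge [y y'] of [G j], the fibre over [y] together with the fibre over
   [y'] moved to [y] is still independent off [j]; by maximality of the fibre
   over [y] nothing was added. *)
Lemma upd_adj_mem y y' t : adj (G j) y y' -> t \in S -> t j = y' -> upd t j y \in S.
Proof.
move=> yy' tS tj.
set X := fibre y :|: [set upd u j y | u in fibre y'].
have Xj : X \subset [set w : Z | w j == y].
  apply/subsetP => w; rewrite !inE => /orP[/andP[_ ->] // | /imsetP[u _ ->]].
  by rewrite upd_same.
have updK (a : Z) i : i \in K -> upd a j y i = a i.
  by rewrite !inE => /andP[ij _]; rewrite upd_other.
have cross a u : a \in fibre y -> u \in fibre y' -> ~~ adj_on K a (upd u j y).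
  rewrite !inE => /andP[aS /eqP aj] /andP[uS /eqP uj].
  rewrite adj_on_sym (adj_on_eql (updK u)) adj_on_sym; apply/negP => au.
  have := indepP Sind a u aS uS; rewrite prod_adjE -(setD1K (in_setT j)) adj_onU au.
  by rewrite andbT adj_on1 aj uj yy'.
have Xind : indep (adj_on K) X.
  apply/indepP => a b; rewrite in_setU => /orP[aY | /imsetP[u uY ->]];
    rewrite in_setU => /orP[bY | /imsetP[u' u'Y ->]].
  - exact: (indepP (fibre_indep y)).
  - exact: cross.
  - by rewrite adj_on_sym; apply: cross.
  - rewrite (adj_on_eql (updK u)) adj_on_sym (adj_on_eql (updK u')) adj_on_sym.
    exact: (indepP (fibre_indep y')).
have := card_fibre_indep_le Xj Xind; rewrite -(card_fibreE y) ler_nat => XS.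
have := geq_leqif (subset_leqif_cards (subsetUl (fibre y) [set upd u j y | u in fibre y'])).
rewrite XS => /esym/eqP XE.
have : upd t j y \in X by rewrite in_setU; apply/orP; right; apply: imset_f; rewrite inE tS tj eqxx.
by rewrite /X -XE inE => /andP[].
Qed.

Lemma connect_upd_mem y1 y2 : connect (adj (G j)) y1 y2 ->
  forall t, t \in S -> t j = y1 -> upd t j y2 \in S.
Proof.
move=> /connectP[p pth ->] {y2}; elim: p y1 pth => [|y3 p IHp] y1 /= pth t tS tj.
  by rewrite -tj upd_id.
case/andP: pth => y13 pth.
have t3 : upd t j y3 \in S by apply: upd_adj_mem (tj); rewrite // adj_sym.
by have := IHp y3 pth _ t3 (upd_same t j y3); rewrite upd_upd.
Qed.

Lemma max_indep_upd_mem : connected (G j) -> forall s v, s \in S -> upd s j v \in S.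
Proof. by move=> Gj s v sS; apply: connect_upd_mem (Gj (s j) v) s sS erefl. Qed.

End MaxIndepFibres.

Arguments max_indep_upd_mem {I G r j S}.

Lemma card_vt_gt0 (H : graph) : nonempty_graph H -> (0 < #|vt H|)%N.
Proof. by case=> x [y _]; apply/card_gt0P; exists x. Qed.

Lemma exists_adj (H : graph) (v : vt H) :
  nonempty_graph H -> vertex_transitive H -> exists w, adj H v w.
Proof. by move=> [a [b ab]] VT; have [f [[_ fadj] <-]] := VT a v; exists (f b); rewrite fadj. Qed.

Lemma alpha_gt0 (H : graph) : nonempty_graph H -> (0 < alpha (adj H))%N.
Proof.
move=> [x _]; apply: leq_trans (@indep_le_alpha _ _ [set x] _); first by rewrite cards1.
by apply/indepP => p q; rewrite !inE => /eqP -> /eqP ->; rewrite adj_irr.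
Qed.

(* In a non-empty vertex-transitive graph an automorphism sends a vertex of a
   non-empty independent set [A] to a vertex outside [A], so it moves [A]. *)
Lemma aut_moves_indep (H : graph) (A : {set vt H}) :
  nonempty_graph H -> vertex_transitive H -> indep (adj H) A -> A != set0 ->
  exists2 f, is_aut f & exists v a, [/\ v \notin A, a \in A & a \notin f @: A].
Proof.
move=> [b [c bc]] VT Aind /set0Pn[a' a'A].
have [v vA] : exists v, v \notin A.
  case: (boolP (b \in A)) => bA; last by exists b.
  by exists c; apply: contraL bc => cA; apply: (indepP Aind).
have [f [[fb fadj] fa']] := VT a' v.
have vfA : v \in f @: A by rewrite -fa' imset_f.
have [a aA afA] : exists2 a, a \in A & a \notin f @: A.
  case: (boolP (A \subset f @: A)) => [AfA | /subsetPn[a ? ?]]; last by exists a.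
  have : A == f @: A by rewrite eqEcard AfA card_imset ?leqnn //; apply: bij_inj.
  by move/eqP=> AE; move: vA; rewrite AE vfA.
by exists f => //; exists v, a.
Qed.

Section ConnectedFactors.
Context {I : finType} {G : I -> graph} {i0 j : I}.
Local Notation Z := (prodv G).

(* With [C] a connected component of [G j] and [B] an automorphic image of a
   maximum independent [A], this is a maximum independent set but no cylinder. *)
Definition switch_set (C : pred (vt (G j))) (A B : {set vt (G i0)}) : {set Z} :=
  [set z : Z | if C (z j) then z i0 \in A else z i0 \in B].

Lemma indep_switch_set {C : pred (vt (G j))} {A B : {set vt (G i0)}} :
  (forall a b, adj (G j) a b -> C a = C b) ->
  indep (adj (G i0)) A -> indep (adj (G i0)) B -> indep (prod_adj G) (switch_set C A B).
Proof.
move=> Cadj Aind Bind; apply/indepP => z w; rewrite !inE => zS wS; apply/negP => /forallP zw.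
move: zS wS; rewrite -(Cadj _ _ (zw j)); case: (C (z j)) => zX wX.
  by have := indepP Aind _ _ zX wX; rewrite zw.
by have := indepP Bind _ _ zX wX; rewrite zw.
Qed.

Lemma card_switch_set_ge (C : pred (vt (G j))) {A : {set vt (G i0)}} {f} :
  j != i0 -> injective f -> (#|A| * card_but G i0 <= #|switch_set C A (f @: A)|)%N.
Proof.
move=> ji0 finj.
pose phi (z : Z) : Z := if C (z j) then z else upd z i0 (f (z i0)).
have phij z : phi z j = z j by rewrite /phi; case: (C (z j)); rewrite ?upd_other.
have phi_inj : injective phi.
  move=> z w E; have Ej : z j = w j by rewrite -phij E phij.
  move: E; rewrite /phi Ej; case: (C (w j)) => // E.
  apply/ffunP => i; case: (eqVneq i i0) => [-> | ii0].
    by apply: finj; move: (congr1 (fun u : Z => u i0) E); rewrite /= !upd_same.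
  by move: (congr1 (fun u : Z => u i) E); rewrite /= !upd_other.
rewrite -card_cylinder -(card_imset _ phi_inj); apply: subset_leq_card.
apply/subsetP => _ /imsetP[z zA ->]; rewrite !inE phij in zA *.
by rewrite /phi; case: (C (z j)); rewrite ?upd_same ?imset_f.
Qed.

Lemma switch_set_not_cylinder {C : pred (vt (G j))} {A B : {set vt (G i0)}} (z0 : Z) {x y a v} :
  j != i0 -> C x -> ~~ C y -> a \in A -> a \notin B -> v \notin A ->
  forall k (A' : {set vt (G k)}), switch_set C A B != [set z : Z | z k \in A'].
Proof.
move=> ji0 Cx Cy aA aB vA k A'; apply/eqP => SA'.
pose z1 := upd (upd z0 i0 a) j x.
have z1j : z1 j = x by rewrite upd_same.
have z1i0 : z1 i0 = a by rewrite upd_other ?upd_same // eq_sym.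
have z1S : z1 \in switch_set C A B by rewrite inE z1j Cx z1i0.
have mem_k (w : Z) : w k = z1 k -> w \in switch_set C A B.
  by move=> wk; move: z1S; rewrite SA' !inE wk.
have i0j : i0 != j by rewrite eq_sym.
case: (eqVneq k j) => [kj | kj].
  have z3j : upd z1 i0 v j = x by rewrite upd_other.
  suff : upd z1 i0 v \in switch_set C A B by rewrite inE z3j Cx upd_same (negbTE vA).
  by apply: mem_k; rewrite upd_other // kj.
have z2i0 : upd z1 j y i0 = a by rewrite upd_other.
suff : upd z1 j y \in switch_set C A B by rewrite inE upd_same (negbTE Cy) z2i0 (negbTE aB).
by apply: mem_k; rewrite upd_other.
Qed.

End ConnectedFactors.

Lemma connected_of_MIS_normal (I : finType) (G : I -> graph) (i0 j : I) :
  j != i0 -> (forall i, nonempty_graph (G i)) -> (forall i, vertex_transitive (G i)) ->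
  (forall i, (indep_ratio (G i) <= indep_ratio (G i0))%R) ->
  MIS_normal G -> connected (G j).
Proof.
move=> ji0 Hne VT rmax MG x y; apply/idPn => nxy.
have [A Aind Acard] := alpha_witness (adj (G i0)).
have A0 : A != set0 by rewrite -card_gt0 Acard alpha_gt0.
have [f [fbij fadj] [v [a [vA aA afA]]]] := aut_moves_indep A (Hne i0) (VT i0) Aind A0.
have finj : injective f by apply: bij_inj.
set C := connect (adj (G j)) x.
have Cadj p q : adj (G j) p q -> C p = C q.
  move=> pq; apply/idP/idP => H; first exact: connect_trans H (connect1 pq).
  by apply: connect_trans H (connect1 _); rewrite adj_sym.
have fAind : indep (adj (G i0)) (f @: A).
  by apply/indepP => p q /imsetP[p' p'A ->] /imsetP[q' q'A ->]; rewrite fadj; apply: (indepP Aind).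
have Sind := indep_switch_set Cadj Aind fAind.
have Smax : max_indep (prod_adj G) (switch_set C A (f @: A)).
  rewrite /max_indep Sind eqn_leq indep_le_alpha //= -(ler_nat rat).
  rewrite (alpha_prodE i0 VT (card_vt_gt0 (Hne i0)) rmax) (card_prodv G i0) natrM mulrA.
  rewrite /indep_ratio divfK ?pnatr_eq0 -?lt0n ?card_vt_gt0 // -natrM ler_nat -Acard.
  exact: card_switch_set_ge ji0 finj.
have /card_gt0P[z0 _] : (0 < #|prodv G|)%N.
  rewrite (card_prodv G i0) muln_gt0 card_vt_gt0 //.
  by rewrite prodn_gt0 // => i; apply: card_vt_gt0.
have [k [A' [_ SA']]] := MG _ Smax.
have := switch_set_not_cylinder z0 ji0 (connect0 _ x) nxy aA afA vA k A'.
by rewrite SA' eqxx.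
Qed.

Lemma max_indep_cylinder_ratio {I : finType} {G : I -> graph} {i} {A : {set vt (G i)}} :
  max_indep (prod_adj G) [set z : prodv G | z i \in A] -> indep (adj (G i)) A ->
  ((alpha (prod_adj G))%:R <= indep_ratio (G i) * #|prodv G|%:R)%R.
Proof.
move=> /andP[_ /eqP <-] Aind; rewrite card_cylinder (card_prodv G i).
have [Vi0 | Vi] := posnP #|vt (G i)|.
  by rewrite Vi0 mul0n mulr0 lern0 muln_eq0 -leqn0 -Vi0 max_card.
have -> : (indep_ratio (G i) * (#|vt (G i)| * card_but G i)%:R =
           (alpha (adj (G i)) * card_but G i)%:R)%R.
  by rewrite /indep_ratio !natrM mulrA divfK ?pnatr_eq0 -?lt0n.
by rewrite ler_nat leq_mul2r indep_le_alpha ?orbT.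
Qed.

Section HeadFactors.
Variables (n l : nat) (G : 'I_n -> graph) (hl : (l <= n)%N).

Definition head_graphs (i : 'I_l) : graph := G (widen_ord hl i).

Local Notation Z := (prodv G).
Local Notation H := (prodv head_graphs).
Local Notation wid := (widen_ord hl).

Definition restr (z : Z) : H := [ffun i => z (wid i)].

Lemma restrE (z : Z) i : restr z i = z (wid i).
Proof. by rewrite ffunE. Qed.

Lemma restr_adj (z w : Z) : prod_adj G z w -> prod_adj head_graphs (restr z) (restr w).
Proof. by move/forallP => zw; apply/forallP => i; rewrite !restrE; apply: zw. Qed.

Definition tail_card := (\prod_(i : 'I_n | (l <= i)%N) #|vt (G i)|)%N.

(* The coordinates of [z] with [restr z = h]: a singleton below [l], everything above. *)
Definition restr_box (h : H) (i : 'I_n) : {set vt (G i)} :=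
  [set v | [forall j : 'I_l,
     if @eqP _ (wid j) i is ReflectT e then v == ecast i (vt (G i)) e (h j) else true]].

Lemma restr_boxP (h : H) (z : Z) : (restr z == h) = [forall i, z i \in restr_box h i].
Proof.
apply/eqP/forallP => [<- i | zh].
  by rewrite inE; apply/forallP => j; case: eqP => // e; case: i / e; rewrite restrE.
apply/ffunP => j; rewrite restrE.
by have := zh (wid j); rewrite inE => /forallP/(_ j); case: eqP => // e; rewrite eq_axiomK => /eqP.
Qed.

Lemma card_restr_box (h : H) i :
  #|restr_box h i| = (if (i < l)%N then 1 else #|vt (G i)|)%N.
Proof.
case: ltnP => il.
  have e : wid (Ordinal il) = i by apply: val_inj.
  apply/eqP/cards1P; exists (ecast i (vt (G i)) e (h (Ordinal il))).
  apply/setP => v; rewrite !inE; apply/forallP/eqP => [vh | -> j].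
    by have := vh (Ordinal il); case: eqP => // e'; rewrite (eq_irrelevance e' e) => /eqP.
  case: eqP => // e'; have jE : j = Ordinal il by apply: val_inj; move: e' => /(congr1 val) /= ->.
  by subst j; rewrite (eq_irrelevance e' e).
rewrite -cardsT; apply: eq_card => v; rewrite !inE; apply/forallP => j.
case: eqP => // e; exfalso; move: il; rewrite -e /= leqNgt; case/negP.
exact: ltn_ord.
Qed.

Lemma card_restr_fibre (h : H) : #|[set z : Z | restr z == h]| = tail_card.
Proof.
rewrite (eq_card (B := [set z : Z | [forall i, z i \in restr_box h i]])); last first.
  by move=> z; rewrite !inE restr_boxP.
rewrite card_box (bigID (fun i : 'I_n => (l <= i)%N)) /=.
rewrite [X in (_ * X)%N]big1 ?muln1 => [|i]; last by rewrite -ltnNge card_restr_box => ->.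
by apply: eq_bigr => i li; rewrite card_restr_box ltnNge li.
Qed.

Lemma card_preimage_restr (T : {set H}) :
  #|[set z : Z | restr z \in T]| = (#|T| * tail_card)%N.
Proof.
rewrite -sum1_card (partition_big restr (mem T)) /=; last by move=> z; rewrite inE.
rewrite -sum_nat_const; apply: eq_bigr => h hT.
rewrite -(card_restr_fibre h) -sum1_card; apply: eq_bigl => z; rewrite !inE.
by apply/andP/idP => [[] | zh] //; rewrite zh (eqP zh).
Qed.

Lemma card_prodv_head : #|Z| = (#|H| * tail_card)%N.
Proof.
have := card_preimage_restr setT; rewrite cardsT => <-.
by apply: eq_card => z; rewrite !inE.
Qed.

Lemma preimage_restr_inj (T T' : {set H}) : (0 < tail_card)%N ->
  [set z : Z | restr z \in T] = [set z : Z | restr z \in T'] -> T = T'.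
Proof.
move=> tail_gt0 E; apply/setP => h.
have /card_gt0P[z] : (0 < #|[set z : Z | restr z == h]|)%N by rewrite card_restr_fibre.
by rewrite inE => /eqP <-; have := congr1 (fun X : {set Z} => z \in X) E; rewrite !inE.
Qed.

(* A set that is stable under changing any coordinate [>= l] is determined by
   the restrictions of its points; change the tail coordinates one at a time. *)
Lemma restr_closed (S : {set Z}) :
  (forall j : 'I_n, (l <= j)%N -> forall s v, s \in S -> upd s j v \in S) ->
  forall s z, s \in S -> restr z = restr s -> z \in S.
Proof.
move=> Supd s z sS E.
suff agree k (s' z' : Z) : s' \in S ->
    (forall i : 'I_n, ((i < l) || (k <= i))%N -> z' i = s' i) -> z' \in S.
  apply: (agree n s z sS) => i /orP[il | ni]; last by move: (ltn_ord i); rewrite ltnNge ni.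
  have e : wid (Ordinal il) = i by apply: val_inj.
  by rewrite -e -!restrE E.
elim: k s' z' => [|k IH] s' z' s'S zs'.
  by have -> : z' = s' by apply/ffunP => i; apply: zs'; rewrite orbT.
have [kn | nk] := ltnP k n; last first.
  apply: (IH s') => // i /orP[il | ki]; first by rewrite zs' ?il.
  by move: (ltn_ord i); rewrite ltnNge (leq_trans nk ki).
have [kl | lk] := ltnP k l.
  apply: (IH s') => // i /orP[il | ki]; apply: zs'; first by rewrite il.
  by move: ki; rewrite leq_eqVlt => /orP[/eqP <- | ->]; rewrite ?kl ?orbT.
pose kk := Ordinal kn.
apply: (IH (upd s' kk (z' kk))); first exact: Supd.
move=> i iP; case: (eqVneq i kk) => [-> | ik]; first by rewrite upd_same.
rewrite upd_other // zs' //; case/orP: iP => [-> // | ki]; apply/orP; right.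
by rewrite ltn_neqAle ki andbT; apply: contra ik => /eqP e; apply/eqP/val_inj; rewrite /= -e.
Qed.

Section MaxRatioInHead.
Variables (i0 : 'I_n) (hi0 : (i0 < l)%N).
Hypothesis Hne : forall i, nonempty_graph (G i).
Hypothesis VT : forall i, vertex_transitive (G i).
Hypothesis rmax : forall i, (indep_ratio (G i) <= indep_ratio (G i0))%R.

Local Notation r := (indep_ratio (G i0)).

Lemma tail_card_gt0 : (0 < tail_card)%N.
Proof. by rewrite prodn_gt0 // => i; apply: card_vt_gt0. Qed.

Lemma alpha_prodG : ((alpha (prod_adj G))%:R = r * #|Z|%:R)%R.
Proof. exact: alpha_prodE i0 VT (card_vt_gt0 (Hne i0)) rmax. Qed.

Lemma alpha_prod_head : alpha (prod_adj G) = (alpha (prod_adj head_graphs) * tail_card)%N.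
Proof.
have wid_i0 : wid (Ordinal hi0) = i0 by apply: val_inj.
have alpha_head : ((alpha (prod_adj head_graphs))%:R = r * #|H|%:R)%R.
  rewrite -wid_i0; apply: alpha_prodE => [i | | i]; rewrite /head_graphs ?wid_i0.
  - exact: VT.
  - exact: card_vt_gt0.
  - exact: rmax.
by apply/eqP; rewrite -(eqr_nat rat) natrM alpha_prodG alpha_head card_prodv_head natrM mulrA.
Qed.

Lemma restr_surj (h : H) : exists z : Z, restr z = h.
Proof.
have /card_gt0P[z] : (0 < #|[set z : Z | restr z == h]|)%N.
  by rewrite card_restr_fibre tail_card_gt0.
by rewrite inE => /eqP <-; exists z.
Qed.

(* The tail factors have no isolated vertices, so an edge between restrictions
   lifts to an edge between points of their preimages. *)
Lemma indep_preimage_restr (T : {set H}) :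
  indep (prod_adj G) [set z : Z | restr z \in T] = indep (prod_adj head_graphs) T.
Proof.
apply/indepP/indepP => Tind; last first.
  by move=> z w; rewrite !inE => zT wT; apply: contraNN (Tind _ _ zT wT); apply: restr_adj.
have [nb nbP] : exists nb : forall i, vt (G i) -> vt (G i), forall i v, adj (G i) v (nb i v).
  have nbi i : exists f : vt (G i) -> vt (G i), forall v, adj (G i) v (f v).
    by have [f fP] := fin_all_exists (fun v => exists_adj v (Hne i) (VT i)); exists f.
  by have [f fP] := fin_all_exists nbi; exists f.
move=> h h' hT h'T; apply/negP => /forallP hh'.
have [z zh] := restr_surj h; have [z' zh'] := restr_surj h'.
pose w : Z := [ffun i : 'I_n => if (i < l)%N then z' i else nb i (z i)].
have wh' : restr w = h'.
  by rewrite -zh'; apply/ffunP => j; rewrite !restrE ffunE /= ltn_ord.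
have zT : z \in [set z : Z | restr z \in T] by rewrite inE zh.
have wT : w \in [set z : Z | restr z \in T] by rewrite inE wh'.
suff : prod_adj G z w by move/negP: (Tind _ _ zT wT).
apply/forallP => i.
rewrite ffunE; case: ltnP => il; last exact: nbP.
have e : wid (Ordinal il) = i by apply: val_inj.
by move: (hh' (Ordinal il)); rewrite -zh -zh' !restrE /head_graphs e.
Qed.

Lemma max_indep_preimage_restr (T : {set H}) :
  max_indep (prod_adj G) [set z : Z | restr z \in T] = max_indep (prod_adj head_graphs) T.
Proof.
rewrite /max_indep indep_preimage_restr card_preimage_restr alpha_prod_head.
by rewrite eqn_pmul2r ?tail_card_gt0.
Qed.

Hypothesis rtail : forall i : 'I_n, (l <= i)%N -> (indep_ratio (G i) < r)%R.

(* A maximum independent set is stable in every connected tail coordinate, so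
   it is the preimage of its restriction. *)
Lemma MIS_normal_of_head :
  MIS_normal head_graphs -> (forall i : 'I_n, (l <= i)%N -> connected (G i)) -> MIS_normal G.
Proof.
move=> MH Gc S Smax; have /andP[Sind /eqP Scard] := Smax.
have Scard' : (#|S|%:R = r * #|Z|%:R)%R by rewrite Scard alpha_prodG.
have Supd (j : 'I_n) : (l <= j)%N -> forall s v, s \in S -> upd s j v \in S.
  by move=> lj; apply: max_indep_upd_mem VT rmax (rtail j lj) Sind Scard' (Gc j lj).
have SE : S = [set z : Z | restr z \in restr @: S].
  apply/setP => z; rewrite inE; apply/idP/imsetP => [zS | [s sS zs]]; first by exists z.
  exact: restr_closed Supd s z sS zs.
have := MH (restr @: S); rewrite -max_indep_preimage_restr -SE => /(_ Smax) [j [A [Aind TA]]].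
by exists (wid j), A; split => //; rewrite SE TA; apply/setP => z; rewrite !inE restrE.
Qed.

Lemma MIS_normal_head : MIS_normal G -> MIS_normal head_graphs.
Proof.
move=> MG T Tmax.
have := MG [set z : Z | restr z \in T].
rewrite max_indep_preimage_restr => /(_ Tmax) [i [A [Aind TA]]].
have [il | li] := ltnP i l.
  have [j ji] : exists j : 'I_l, wid j = i by exists (Ordinal il); apply: val_inj.
  subst i.
  exists j, A; split => //; apply: (preimage_restr_inj tail_card_gt0).
  by rewrite TA; apply/setP => z; rewrite !inE restrE.
have Zpos : (0 < #|Z|%:R :> rat)%R.
  by rewrite ltr0n (card_prodv G i0) muln_gt0 card_vt_gt0 // prodn_gt0 // => k; apply: card_vt_gt0.
have cyl_max : max_indep (prod_adj G) [set z : Z | z i \in A].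
  by rewrite -TA max_indep_preimage_restr.
have := max_indep_cylinder_ratio cyl_max Aind.
by rewrite alpha_prodG ler_pM2r // leNgt rtail.
Qed.

End MaxRatioInHead.
End HeadFactors.

Theorem proposition3p1 (n l : nat) (G : 'I_n -> graph)
  (hl0 : (0 < l)%N) (hln : (l < n)%N) :
  (forall i, nonempty_graph (G i)) ->
  (forall i, vertex_transitive (G i)) ->
  (forall i : 'I_n, forall j : 'I_n, (i <= j)%N -> (indep_ratio (G j) <= indep_ratio (G i))%R) ->
  (forall i : 'I_n, (i < l)%N -> indep_ratio (G i) = indep_ratio (G (Ordinal (leq_ltn_trans (leq0n _) hln)))) ->
  (forall i : 'I_n, (l <= i)%N -> (indep_ratio (G i) < indep_ratio (G (Ordinal (leq_ltn_trans (leq0n _) hln))))%R) ->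
  (indep_ratio (G (Ordinal (leq_ltn_trans (leq0n _) hln))) <= 1 / 2)%R ->
  (MIS_normal G <->
     (MIS_normal (fun i : 'I_l => G (widen_ord (ltnW hln) i)) /\
      forall i : 'I_n, (l <= i)%N -> connected (G i))).
Proof.
move=> Hne VT rmono _ rtail _.
pose i0 : 'I_n := Ordinal (leq_ltn_trans (leq0n _) hln).
have rmax i : (indep_ratio (G i) <= indep_ratio (G i0))%R by apply: rmono.
split => [MG | [MH Gc]].
  split; first exact: (MIS_normal_head i0 hl0 Hne VT rmax rtail MG).
  move=> i li; apply: (connected_of_MIS_normal i0 i) => //.
  by rewrite -val_eqE /= -lt0n (leq_trans hl0 li).
exact: (MIS_normal_of_head i0 hl0 Hne VT rmax rtail MH Gc).
Qed.
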